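(* Let $(A,*,\{\cdot,\cdot,\cdot\})$ be a pre-Lie-Yamaguti algebra. Then: (i) the operations $[x,y]_C=x*y-y*x$ and $[\![x,y,z]\!]_C=\{x,y,z\}_D+\{x,y,z\}-\{y,x,z\}$ ($x,y,z\in A$) define a Lie-Yamaguti algebra structure on $A$ (the subadjacent Lie-Yamaguti algebra $A^c$); (ii) defining $L:A\to\mathfrak{gl}(A)$, $L_xz=x*z$, and $\mathcal R:\otimes^2A\to\mathfrak{gl}(A)$, $\mathcal R(x,y)z=\{z,x,y\}$, the triple $(A;L,\mathcal R)$ is a representation of $A^c$ on $A$, and the identity map $\mathrm{Id}:A\to A$ is a relative Rota-Baxter operator on $A^c$ with respect to $(A;L,\mathcal R)$.
   Context: All vector spaces are over a field of characteristic $0$. A pre-Lie-Yamaguti algebra is a vector space $A$ with a bilinear operation $*$ and a trilinear operation $\{\cdot,\cdot,\cdot\}$ such that, writing $[x,y]_C=x*y-y*x$, $(x,y,z)=(x*y)*z-x*(y*z)$ and $\{x,y,z\}_D=\{z,y,x\}-\{z,x,y\}+(y,x,z)-(x,y,z)$, for all $x,y,z,w,t\in A$: (P1) $\{z,[x,y]_C,w\}-\{y*z,x,w\}+\{x*z,y,w\}=0$; (P2) $\{x,y,[z,w]_C\}=z*\{x,y,w\}-w*\{x,y,z\}$; (P3) $\{\{x,y,z\},w,t\}-\{\{x,y,w\},z,t\}-\{x,y,\{z,w,t\}_D\}-\{x,y,\{z,w,t\}\}+\{x,y,\{w,z,t\}\}+\{z,w,\{x,y,t\}\}_D=0$; (P4)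 $\{z,\{x,y,w\}_D,t\}+\{z,\{x,y,w\},t\}-\{z,\{y,x,w\},t\}+\{z,w,\{x,y,t\}_D\}+\{z,w,\{x,y,t\}\}-\{z,w,\{y,x,t\}\}=\{x,y,\{z,w,t\}\}_D-\{\{x,y,z\}_D,w,t\}$; (P5) $\{x,y,z\}_D*w+\{x,y,z\}*w-\{y,x,z\}*w=\{x,y,z*w\}_D-z*\{x,y,w\}_D$. A Lie-Yamaguti algebra is a vector space $\mathfrak g$ with a bilinear skew-symmetric $[\cdot,\cdot]$ and a trilinear $[\![\cdot,\cdot,\cdot]\!]$ skew-symmetric in its first two arguments such that for all $x,y,z,w,t$: (1) $[[x,y],z]+[[y,z],x]+[[z,x],y]+[\![x,y,z]\!]+[\![y,z,x]\!]+[\![z,x,y]\!]=0$; (2) $[\![[x,y],z,w]\!]+[\![[y,z],x,w]\!]+[\![[z,x],y,w]\!]=0$; (3) $[\![x,y,[z,w]]\!]=[[\![x,y,z]\!],w]+[z,[\![x,y,w]\!]]$; (4) $[\![x,y,[\![z,w,t]\!]]\!]=[\![[\![x,y,z]\!],w,t]\!]+[\![z,[\![x,y,w]\!],t]\!]+[\![z,w,[\![x,y,t]\!]]\!]$. A representation $(V;\rho,\mu)$ of $\mathfrak g$ is a linear $\rho:\mathfrak g\to\mathfrak{gl}(V)$ and bilinear $\mu:\otimes^2\mathfrak g\to\mathfrak{gl}(V)$ such that, with $D_{\rho,\mu}(x,y):=\mu(y,x)-\mu(x,y)+[\rho(x),\rho(y)]-\rho([x,y])$: $\mu([x,y],z)-\mu(x,z)\rho(y)+\mu(y,z)\rho(x)=0$;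 $\mu(x,[y,z])-\rho(y)\mu(x,z)+\rho(z)\mu(x,y)=0$; $\rho([\![x,y,z]\!])=[D_{\rho,\mu}(x,y),\rho(z)]$; $\mu(z,w)\mu(x,y)-\mu(y,w)\mu(x,z)-\mu(x,[\![y,z,w]\!])+D_{\rho,\mu}(y,z)\mu(x,w)=0$; $\mu([\![x,y,z]\!],w)+\mu(z,[\![x,y,w]\!])=[D_{\rho,\mu}(x,y),\mu(z,w)]$. A relative Rota-Baxter operator on $\mathfrak g$ with respect to $(V;\rho,\mu)$ is a linear map $T:V\to\mathfrak g$ with $[Tu,Tv]=T(\rho(Tu)v-\rho(Tv)u)$ and $[\![Tu,Tv,Tw]\!]=T(D_{\rho,\mu}(Tu,Tv)w+\mu(Tv,Tw)u-\mu(Tu,Tw)v)$ for all $u,v,w\in V$. *)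

From HB Require Import structures.
From mathcomp Require Import all_boot all_order all_algebra.
Set Implicit Arguments. Unset Strict Implicit. Unset Printing Implicit Defensive.
Import GRing.Theory.
Local Open Scope ring_scope.

Section Defs.
Variable K : fieldType.

Definition lin (U W : lmodType K) (f : U -> W) : Prop :=
  forall (a : K) (u v : U), f (a *: u + v) = a *: f u + f v.

Definition bilin (U W : lmodType K) (f : U -> U -> W) : Prop :=
  (forall x, lin (f x)) /\ (forall y, lin (fun x => f x y)).

Definition trilin (U W : lmodType K) (f : U -> U -> U -> W) : Prop :=
  (forall x y, lin (f x y)) /\ (forall x z, lin (fun y => f x y z)) /\
  (forall y z, lin (fun x => f x y z)).

Section PLY.
Variable A : lmodType K.
Variable mul : A -> A -> A.
Variable br : A -> A -> A -> A.

Definition commC (x y : A) : A := mul x y - mul y x.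
Definition assoc (x y z : A) : A := mul (mul x y) z - mul x (mul y z).
Definition braceD (x y z : A) : A :=
  br z y x - br z x y + assoc y x z - assoc x y z.

Definition is_preLY : Prop :=
  bilin mul /\ trilin br /\
  (forall x y z w,
     br z (commC x y) w - br (mul y z) x w + br (mul x z) y w = 0) /\
  (forall x y z w,
     br x y (commC z w) = mul z (br x y w) - mul w (br x y z)) /\
  (forall x y z w t,
     br (br x y z) w t - br (br x y w) z t - br x y (braceD z w t)
     - br x y (br z w t) + br x y (br w z t) + braceD z w (br x y t) = 0) /\
  (forall x y z w t,
     br z (braceD x y w) t + br z (br x y w) t - br z (br y x w) t
     + br z w (braceD x y t) + br z w (br x y t) - br z w (br y x t)
     = braceD x y (br z w t) - br (braceD x y z) w t) /\
  (forall x y z w,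
     mul (braceD x y z) w + mul (br x y z) w - mul (br y x z) w
     = braceD x y (mul z w) - mul z (braceD x y w)).

Definition triC (x y z : A) : A := braceD x y z + br x y z - br y x z.
End PLY.

Section LY.
Variable g : lmodType K.
Variable lb : g -> g -> g.
Variable tb : g -> g -> g -> g.

Definition is_LY : Prop :=
  bilin lb /\ trilin tb /\
  (forall x y, lb x y = - lb y x) /\
  (forall x y z, tb x y z = - tb y x z) /\
  (forall x y z,
     lb (lb x y) z + lb (lb y z) x + lb (lb z x) y
     + tb x y z + tb y z x + tb z x y = 0) /\
  (forall x y z w,
     tb (lb x y) z w + tb (lb y z) x w + tb (lb z x) y w = 0) /\
  (forall x y z w,
     tb x y (lb z w) = lb (tb x y z) w + lb z (tb x y w)) /\
  (forall x y z w t,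
     tb x y (tb z w t) = tb (tb x y z) w t + tb z (tb x y w) t
                         + tb z w (tb x y t)).

(* representations: rho : g -> gl(V) linear, mu : g (x) g -> gl(V) bilinear;
   endomorphisms are linear maps V -> V, products are compositions,
   and all identities are stated pointwise on v : V. *)
Section Rep.
Variable V : lmodType K.
Variable rho : g -> V -> V.
Variable mu : g -> g -> V -> V.

Definition Drm (x y : g) (v : V) : V :=
  mu y x v - mu x y v + (rho x (rho y v) - rho y (rho x v)) - rho (lb x y) v.

Definition is_rep : Prop :=
  (forall x, lin (rho x)) /\ (forall v, lin (fun x => rho x v)) /\
  (forall x y, lin (mu x y)) /\ (forall v, bilin (fun x y => mu x y v)) /\
  (forall x y z v, mu (lb x y) z v - mu x z (rho y v) + mu y z (rho x v) = 0) /\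
  (forall x y z v, mu x (lb y z) v - rho y (mu x z v) + rho z (mu x y v) = 0) /\
  (forall x y z v, rho (tb x y z) v = Drm x y (rho z v) - rho z (Drm x y v)) /\
  (forall x y z w v,
     mu z w (mu x y v) - mu y w (mu x z v) - mu x (tb y z w) v
     + Drm y z (mu x w v) = 0) /\
  (forall x y z w v,
     mu (tb x y z) w v + mu z (tb x y w) v
     = Drm x y (mu z w v) - mu z w (Drm x y v)).

Definition is_relRB (T : V -> g) : Prop :=
  lin T /\
  (forall u v, lb (T u) (T v) = T (rho (T u) v - rho (T v) u)) /\
  (forall u v w, tb (T u) (T v) (T w)
     = T (Drm (T u) (T v) w + mu (T v) (T w) u - mu (T u) (T w) v)).
End Rep.
End LY.
End Defs.

(* Every identity to be checked becomes, after multilinear expansion, an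
   integer combination of instances of the axioms (P1)-(P5).  In particular,
   for the representation (L, R) the operator D_{L,R}(x, y) is {x, y, .}_D, so
   the representation axioms are (P1), (P2), (P5), (P3), (P4) in disguise, and
   the Lie-Yamaguti axioms of A^c are explicit combinations of them. *)

From mathcomp Require Import all_boot all_order all_algebra.
Set Implicit Arguments. Unset Strict Implicit. Unset Printing Implicit Defensive.
Import GRing.Theory.
Local Open Scope ring_scope.

Inductive zterm := ZAtom of nat | ZOpp of zterm | ZAdd of zterm & zterm | ZZero.

Fixpoint zeval (V : zmodType) (env : seq V) (t : zterm) : V :=
  match t with
  | ZAtom i => env`_i
  | ZOpp t => - zeval env t
  | ZAdd t1 t2 => zeval env t1 + zeval env t2
  | ZZero => 0
  end.

Fixpoint zcoef (i : nat) (t : zterm) : int :=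
  match t with
  | ZAtom j => (i == j)%:Z
  | ZOpp t => - zcoef i t
  | ZAdd t1 t2 => zcoef i t1 + zcoef i t2
  | ZZero => 0
  end.

Fixpoint zsupp (t : zterm) : nat :=
  match t with
  | ZAtom j => j.+1
  | ZOpp t => zsupp t
  | ZAdd t1 t2 => maxn (zsupp t1) (zsupp t2)
  | ZZero => 0
  end.

Lemma zeval_sum (V : zmodType) (env : seq V) t n : (zsupp t <= n)%N ->
  zeval env t = \sum_(i < n) env`_i *~ zcoef i t.
Proof.
elim: t => [j|t IH|t1 IH1 t2 IH2|] /=.
- move=> lt_jn; rewrite (bigD1 (Ordinal lt_jn)) //= eqxx mulr1z big1 ?addr0 //.
  by move=> i /negbTE; rewrite -val_eqE /= => ->; rewrite mulr0z.
- by move=> /IH ->; rewrite -sumrN; apply: eq_bigr => i _; rewrite mulrNz.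
- rewrite geq_max => /andP[/IH1 -> /IH2 ->]; rewrite -big_split /=.
  by apply: eq_bigr => i _; rewrite mulrzDr.
- by move=> _; rewrite big1 // => i _; rewrite mulr0z.
Qed.

Lemma zeval_eq (V : zmodType) (env : seq V) t1 t2 :
  all (fun i => zcoef i t1 == zcoef i t2) (iota 0 (maxn (zsupp t1) (zsupp t2))) ->
  zeval env t1 = zeval env t2.
Proof.
move=> /allP same_coef.
rewrite !(@zeval_sum _ env _ (maxn (zsupp t1) (zsupp t2))) ?leq_maxl ?leq_maxr //.
by apply: eq_bigr => i _; rewrite (eqP (same_coef i _)) // mem_iota ltn_ord.
Qed.

Ltac zindex x l :=
  match l with
  | ?y :: _ => let _ := constr:(erefl x : x = y) in constr:(0%N)
  | _ :: ?l => let n := zindex x l in constr:(n.+1)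
  end.

Ltac zatoms e l :=
  match e with
  | ?a + ?b => let l := zatoms a l in zatoms b l
  | - ?a => zatoms a l
  | 0 => l
  | _ => match l with _ => let _ := zindex e l in l | _ => constr:(e :: l) end
  end.

Ltac zreify e l :=
  match e with
  | ?a + ?b => let ra := zreify a l in let rb := zreify b l in constr:(ZAdd ra rb)
  | - ?a => let ra := zreify a l in constr:(ZOpp ra)
  | 0 => constr:(ZZero)
  | _ => let n := zindex e l in constr:(ZAtom n)
  end.

(* Decides identities of commutative groups whose atoms are the maximal
   subterms not built from [+], [-] and [0].  Atoms are identified up to
   conversion: rewriting may produce copies of one atom that differ only in
   their elaborated structure instances. *)
Ltac zmodule :=
  match goal with |- @eq ?V ?L ?R =>
    let l := zatoms L (@nil V) in let l := zatoms R l in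
    let tL := zreify L l in let tR := zreify R l in
    change (zeval l tL = zeval l tR); apply: zeval_eq; vm_compute; reflexivity
  end.

Section LinearMaps.
Variables (K : fieldType) (U W : lmodType K) (f : U -> W).
Hypothesis f_lin : lin f.

Lemma linD u v : f (u + v) = f u + f v.
Proof. by rewrite -[u in LHS]scale1r f_lin scale1r. Qed.

Lemma lin0 : f 0 = 0.
Proof. by have := linD 0 0; rewrite addr0 -{1}[f 0]addr0 => /addrI/esym. Qed.

Lemma linN u : f (- u) = - f u.
Proof. by rewrite -scaleN1r -[_ *: u]addr0 f_lin lin0 addr0 scaleN1r. Qed.

Lemma linZ a u : f (a *: u) = a *: f u.
Proof. by rewrite -[a *: u]addr0 f_lin lin0 addr0. Qed.

End LinearMaps.

Lemma eq_by_defect (V : zmodType) (L R D : V) : D = 0 -> L - R = D -> L = R.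
Proof. by move=> D0 LRD; apply: subr0_eq; rewrite LRD. Qed.

Section PreLieYamaguti.
Variables (K : fieldType) (A : lmodType K).
Variables (mul : A -> A -> A) (br : A -> A -> A -> A).

Definition defectP1 x y z w :=
  br z (commC mul x y) w - br (mul y z) x w + br (mul x z) y w.
Definition defectP2 x y z w :=
  br x y (commC mul z w) - (mul z (br x y w) - mul w (br x y z)).
Definition defectP3 x y z w t :=
  br (br x y z) w t - br (br x y w) z t - br x y (braceD mul br z w t)
  - br x y (br z w t) + br x y (br w z t) + braceD mul br z w (br x y t).
Definition defectP4 x y z w t :=
  (br z (braceD mul br x y w) t + br z (br x y w) t - br z (br y x w) t
   + br z w (braceD mul br x y t) + br z w (br x y t) - br z w (br y x t))
  - (braceD mul br x y (br z w t) - br (braceD mul br x y z) w t).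
Definition defectP5 x y z w :=
  (mul (braceD mul br x y z) w + mul (br x y z) w - mul (br y x z) w)
  - (braceD mul br x y (mul z w) - mul z (braceD mul br x y w)).

Hypothesis ply : is_preLY mul br.

Lemma defectP1_eq0 x y z w : defectP1 x y z w = 0.
Proof. by case: ply => _ [_ [P1 _]]; apply: P1. Qed.
Lemma defectP2_eq0 x y z w : defectP2 x y z w = 0.
Proof. by case: ply => _ [_ [_ [P2 _]]]; rewrite /defectP2 P2 subrr. Qed.
Lemma defectP3_eq0 x y z w t : defectP3 x y z w t = 0.
Proof. by case: ply => _ [_ [_ [_ [P3 _]]]]; apply: P3. Qed.
Lemma defectP4_eq0 x y z w t : defectP4 x y z w t = 0.
Proof. by case: ply => _ [_ [_ [_ [_ [P4 _]]]]]; rewrite /defectP4 P4 subrr. Qed.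
Lemma defectP5_eq0 x y z w : defectP5 x y z w = 0.
Proof. by case: ply => _ [_ [_ [_ [_ [_ P5]]]]]; rewrite /defectP5 P5 subrr. Qed.

Let mul_linr x : lin (mul x). Proof. by case: ply => -[]. Qed.
Let mul_linl y : lin (mul^~ y). Proof. by case: ply => -[]. Qed.
Let br_lin3 x y : lin (br x y). Proof. by case: ply => _ [[]]. Qed.
Let br_lin2 x z : lin (br x^~ z). Proof. by case: ply => _ [[_ []]]. Qed.
Let br_lin1 y z : lin (fun x => br x y z). Proof. by case: ply => _ [[_ []]]. Qed.

Lemma mulDl x y z : mul (x + y) z = mul x z + mul y z.
Proof. exact: (linD (mul_linl z)). Qed.
Lemma mulDr x y z : mul x (y + z) = mul x y + mul x z.
Proof. exact: linD. Qed.
Lemma mulNl x z : mul (- x) z = - mul x z.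
Proof. exact: (linN (mul_linl z)). Qed.
Lemma mulNr x z : mul x (- z) = - mul x z.
Proof. exact: linN. Qed.
Lemma mulZl a x z : mul (a *: x) z = a *: mul x z.
Proof. exact: (linZ (mul_linl z)). Qed.
Lemma mulZr a x z : mul x (a *: z) = a *: mul x z.
Proof. exact: linZ. Qed.
Lemma mul0x z : mul 0 z = 0.
Proof. exact: (lin0 (mul_linl z)). Qed.
Lemma mulx0 z : mul z 0 = 0.
Proof. exact: lin0. Qed.

Lemma brD1 x x' y z : br (x + x') y z = br x y z + br x' y z.
Proof. exact: (linD (br_lin1 y z)). Qed.
Lemma brD2 x y y' z : br x (y + y') z = br x y z + br x y' z.
Proof. exact: (linD (br_lin2 x z)). Qed.
Lemma brD3 x y z z' : br x y (z + z') = br x y z + br x y z'.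
Proof. exact: linD. Qed.
Lemma brN1 x y z : br (- x) y z = - br x y z.
Proof. exact: (linN (br_lin1 y z)). Qed.
Lemma brN2 x y z : br x (- y) z = - br x y z.
Proof. exact: (linN (br_lin2 x z)). Qed.
Lemma brN3 x y z : br x y (- z) = - br x y z.
Proof. exact: linN. Qed.
Lemma brZ1 a x y z : br (a *: x) y z = a *: br x y z.
Proof. exact: (linZ (br_lin1 y z)). Qed.
Lemma brZ2 a x y z : br x (a *: y) z = a *: br x y z.
Proof. exact: (linZ (br_lin2 x z)). Qed.
Lemma brZ3 a x y z : br x y (a *: z) = a *: br x y z.
Proof. exact: linZ. Qed.

Ltac expand :=
  rewrite /defectP1 /defectP2 /defectP3 /defectP4 /defectP5;
  rewrite /triC /braceD /assoc /commC /Drm /=;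
  repeat progress rewrite ?mulDl ?mulDr ?mulNl ?mulNr ?mulZl ?mulZr
    ?brD1 ?brD2 ?brD3 ?brN1 ?brN2 ?brN3 ?brZ1 ?brZ2 ?brZ3 ?scalerDr ?scalerN.

Lemma commC_antisym x y : commC mul x y = - commC mul y x.
Proof. by expand; zmodule. Qed.

Lemma triC_antisym x y z : triC mul br x y z = - triC mul br y x z.
Proof. by expand; zmodule. Qed.

Lemma commC_bilin : bilin (commC mul).
Proof. by split=> ? ? ? ?; expand; zmodule. Qed.

Lemma triC_trilin : trilin (triC mul br).
Proof. by split; [|split]=> ? ? ? ? ?; expand; zmodule. Qed.

Lemma commC_triC_jacobi x y z :
  commC mul (commC mul x y) z + commC mul (commC mul y z) x + commC mul (commC mul z x) y
  + triC mul br x y z + triC mul br y z x + triC mul br z x y = 0.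
Proof. by expand; zmodule. Qed.

Lemma triC_commC_cyclic x y z w :
  triC mul br (commC mul x y) z w + triC mul br (commC mul y z) x w
  + triC mul br (commC mul z x) y w = 0.
Proof.
apply: (@eq_by_defect _ _ _
  (defectP2 w z x y - defectP1 x y w z - defectP1 x y z w + defectP2 w x y z
   - defectP1 y z w x + defectP5 y z x w - defectP5 x z y w + defectP5 x y z w
   - defectP1 y z x w - defectP2 w y x z + defectP1 x z w y + defectP1 x z y w)).
  by rewrite !(defectP1_eq0, defectP2_eq0, defectP5_eq0); zmodule.
by expand; zmodule.
Qed.

Lemma triC_commC_derivation x y z w :
  triC mul br x y (commC mul z w)
  = commC mul (triC mul br x y z) w + commC mul z (triC mul br x y w).
Proof.
apply: (@eq_by_defect _ _ _
  (defectP2 x y z w - defectP2 y x z w - defectP5 x y z w + defectP5 x y w z)).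
  by rewrite !(defectP2_eq0, defectP5_eq0); zmodule.
by expand; zmodule.
Qed.

Lemma triC_derivation x y z w t :
  triC mul br x y (triC mul br z w t)
  = triC mul br (triC mul br x y z) w t + triC mul br z (triC mul br x y w) t
    + triC mul br z w (triC mul br x y t).
Proof.
apply: (@eq_by_defect _ _ _
  (defectP4 x y t z w + mul w (defectP5 x y z t) + mul (defectP5 x y z w) t
   + defectP5 x y (mul z w) t - mul (defectP2 x y z w) t
   - defectP5 x y z (mul w t) - defectP3 x y z w t + defectP3 y x z w t
   + defectP4 x y w z t - defectP4 x y t w z - defectP5 x y (mul w z) t
   - defectP4 x y z w t - mul (defectP5 x y w z) t + defectP5 x y w (mul z t)
   - mul z (defectP5 x y w t) + mul (defectP2 y x z w) t)).
  by rewrite !(defectP2_eq0, defectP3_eq0, defectP4_eq0, defectP5_eq0, mul0x, mulx0);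
    zmodule.
by expand; zmodule.
Qed.

Lemma is_LY_subadjacent : is_LY (commC mul) (triC mul br).
Proof.
exact: (conj commC_bilin (conj triC_trilin (conj commC_antisym (conj triC_antisym
  (conj commC_triC_jacobi (conj triC_commC_cyclic
  (conj triC_commC_derivation triC_derivation))))))).
Qed.

Lemma is_rep_regular :
  is_rep (commC mul) (triC mul br) mul (fun x y z => br z x y).
Proof.
do !split; try by rewrite /lin => *; expand; zmodule.
- by move=> x y z v; apply: defectP1_eq0.
- move=> x y z v; apply: (eq_by_defect (defectP2_eq0 v x y z)).
  by expand; zmodule.
- move=> x y z v; apply: (eq_by_defect (defectP5_eq0 x y z v)).
  by expand; zmodule.
- move=> x y z w v; apply: (eq_by_defect (defectP3_eq0 v x y z w)).
  by expand; zmodule.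
- move=> x y z w v; apply: (eq_by_defect (defectP4_eq0 x y v z w)).
  by expand; zmodule.
Qed.

Lemma is_relRB_id :
  is_relRB (commC mul) (triC mul br) mul (fun x y z => br z x y) id.
Proof. by do !split=> *; expand; zmodule. Qed.

End PreLieYamaguti.

Theorem theorem3p11 (K : fieldType) (charK0 : [pchar K] =i pred0)
  (A : lmodType K) (mul : A -> A -> A) (br : A -> A -> A -> A) :
  is_preLY mul br ->
  is_LY (commC mul) (triC mul br) /\
  is_rep (commC mul) (triC mul br) (fun x z => mul x z) (fun x y z => br z x y) /\
  is_relRB (commC mul) (triC mul br) (fun x z => mul x z) (fun x y z => br z x y)
    (fun x : A => x).
Proof.
move=> ply; split; first exact: is_LY_subadjacent.
by split; [exact: is_rep_regular | exact: is_relRB_id].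
Qed.
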